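(* Let $l\in\mathbb N_0$ and assume $x_1^{2l+1}\ne0$, $x_2^2\ne0$, $y_{l+1}\ne0$ in $\mathfrak B(V)$, and that $y_{l+1}y_l$ lies in the linear span of $\{y_ry_s:0\le r\le s\}$. Then $q_{11}^{l(l+1)}\widetilde q_{12}^{\,l+1}q_{22}=1$ and $y_{l+1}y_l=q_{11}^{l(l+1)}q_{12}^{l+1}q_{21}^{l}q_{22}\,y_ly_{l+1}$.
   Context: $\Bbbk$ algebraically closed of characteristic $0$. $V$ is braided of diagonal type with basis $x_1,x_2$, $c(x_i\otimes x_j)=q_{ij}x_j\otimes x_i$, $q_{ij}\in\Bbbk^\times$, $q_{ii}\ne1$, $\widetilde q_{12}=q_{12}q_{21}$; $\mathfrak B(V)$ is its Nichols algebra. $y_0=x_2$, $y_{k+1}=x_1y_k-q_{11}^kq_{12}y_kx_1$ (i.e. $y_k=(\mathrm{ad}_cx_1)^kx_2$). *)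

(* Rank-2 braided vector space of diagonal type, tensor
   algebra T(V) as formal linear combinations of words, Nichols algebra
   B(V) = T(V) / (direct sum of ker Omega_n), Omega_n the quantum symmetrizer. *)
From HB Require Import structures.
From mathcomp Require Import all_boot all_order all_algebra.
Set Implicit Arguments. Unset Strict Implicit. Unset Printing Implicit Defensive.
Import Order.TTheory GRing.Theory Num.Theory.
Local Open Scope ring_scope.

(* letters: x_1 is index i1, x_2 is index i2 *)
Definition i1 : 'I_2 := @Ordinal 2 0 isT.
Definition i2 : 'I_2 := @Ordinal 2 1 isT.

Definition word := seq 'I_2.

Section Tens.
Variable K : fieldType.

(* an element of T(V): a formal (finite) linear combination of words *)
Definition tens := seq (K * word).

Definition tcoef (u : tens) (w : word) : K := \sum_(t <- u | t.2 == w) t.1.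
Definition tadd (u v : tens) : tens := u ++ v.
Definition tscale (a : K) (u : tens) : tens := [seq (a * t.1, t.2) | t <- u].
Definition tsub (u v : tens) : tens := tadd u (tscale (-1) v).
Definition tmul (u v : tens) : tens :=
  [seq (s.1 * t.1, s.2 ++ t.2) | s <- u, t <- v].
Definition tletter (i : 'I_2) : tens := [:: (1, [:: i])].
Definition tpow (i : 'I_2) (n : nat) : tens := [:: (1, nseq n i)].
Definition tsum (s : seq tens) : tens := flatten s.

Variable q : 'I_2 -> 'I_2 -> K.   (* braiding matrix: c(x_i (x) x_j) = q i j x_j (x) x_i *)

Fixpoint ygen (k : nat) : tens :=
  match k with
  | 0 => tletter i2
  | k'.+1 => tsub (tmul (tletter i1) (ygen k'))
                  (tscale (q i1 i1 ^+ k' * q i1 i2) (tmul (ygen k') (tletter i1)))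
  end.

Definition remove_at (j : nat) (w : word) : word := take j w ++ drop j.+1 w.

(* braiding factor for moving the letter at position j of w to the end *)
Definition move_fac (j : nat) (w : word) : K :=
  \prod_(b <- drop j.+1 w) q (nth i1 w j) b.

(* quantum symmetrizer, via Omega_n = (Omega_{n-1} (x) id)(1 + c_{n-1} + ... + c_{n-1}...c_1) *)
Fixpoint omega_fuel (n : nat) (w : word) : tens :=
  match n with
  | 0 => [:: (1, [::])]
  | n'.+1 => tsum [seq tscale (move_fac j w)
                       (tmul (omega_fuel n' (remove_at j w)) (tletter (nth i1 w j)))
                  | j <- iota 0 (size w)]
  end.

Definition omega_word (w : word) : tens := omega_fuel (size w) w.

Definition omega (u : tens) : tens :=
  tsum [seq tscale t.1 (omega_word t.2) | t <- u].

(* u = 0 in the Nichols algebra B(V) *)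
Definition zeroB (u : tens) : Prop := forall w, tcoef (omega u) w = 0.
Definition eqB (u v : tens) : Prop := zeroB (tsub u v).

End Tens.

From HB Require Import structures.
From mathcomp Require Import all_boot all_order all_algebra zify ring.
Set Implicit Arguments. Unset Strict Implicit. Unset Printing Implicit Defensive.
Import GRing.Theory.
Local Open Scope ring_scope.

(* The coefficient of a word in [Omega u] is computed by transposed skew
   derivations: [omega_coef (rcons v i) = der i (omega_coef v)], and these act on
   the [y_k] by explicit scalars ([d_1 y_k = 0], [d_2 y_k = ycoef k x_1^k]).
   Pairing the assumed relation with the words [x_1^(n-j) x_2 x_1^j x_2],
   [n = 2l+1], [j <= n], yields a triangular linear system in its coefficients.
   Taking [j = n - r] shows that for [r < l] either the coefficient of
   [y_r y_(n-r)] vanishes or [y_(n-r)] (hence [y_r y_(n-r)]) is zero in [B(V)];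
   then [j = l+1] computes the coefficient of [y_l y_(l+1)] and [j = 0] gives
   the constraint on the braiding. *)

(** * Pairing tensors with functions on words *)

Section Pairing.
Variable K : fieldType.
Implicit Types (g h : word -> K) (u v : tens K).

Definition teval g u : K := \sum_(t <- u) t.1 * g t.2.

Lemma eq_teval g h u : g =1 h -> teval g u = teval h u.
Proof. by move=> gh; apply: eq_bigr => t _; rewrite gh. Qed.

Lemma tcoef_teval u w : tcoef u w = teval (fun w' => (w' == w)%:R) u.
Proof.
rewrite /tcoef /teval big_mkcond; apply: eq_bigr => t _.
by case: eqP; rewrite ?mulr1 ?mulr0.
Qed.

Lemma teval_add g u v : teval g (tadd u v) = teval g u + teval g v.
Proof. exact: big_cat. Qed.

Lemma teval_scale g a u : teval g (tscale a u) = a * teval g u.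
Proof. by rewrite /teval big_map big_distrr; apply: eq_bigr => t _ /=; rewrite mulrA. Qed.

Lemma teval_sub g u v : teval g (tsub u v) = teval g u - teval g v.
Proof. by rewrite teval_add teval_scale mulN1r. Qed.

Lemma teval_mul g u v :
  teval g (tmul u v) = teval (fun a => teval (fun b => g (a ++ b)) v) u.
Proof.
rewrite /teval big_allpairs_dep; apply: eq_bigr => s _.
by rewrite big_distrr; apply: eq_bigr => t _ /=; rewrite mulrA.
Qed.

Lemma teval_tsum g (s : seq (tens K)) : teval g (tsum s) = \sum_(u <- s) teval g u.
Proof.
elim: s => [|u s IH]; first by rewrite /teval !big_nil.
by rewrite big_cons -IH -teval_add.
Qed.

Lemma teval_letter g i : teval g (tletter K i) = g [:: i].
Proof. by rewrite /teval big_seq1 mul1r. Qed.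

Lemma teval_pow g i n : teval g (tpow K i n) = g (nseq n i).
Proof. by rewrite /teval big_seq1 mul1r. Qed.

Lemma teval_mulfl g c u : teval (fun w => c * g w) u = c * teval g u.
Proof. by rewrite /teval big_distrr; apply: eq_bigr => t _; rewrite mulrCA. Qed.

Lemma teval_addf g h u : teval (fun w => g w + h w) u = teval g u + teval h u.
Proof. by rewrite /teval -big_split; apply: eq_bigr => t _; rewrite mulrDr. Qed.

Lemma teval_subf g h u : teval (fun w => g w - h w) u = teval g u - teval h u.
Proof. by rewrite /teval -sumrB; apply: eq_bigr => t _; rewrite mulrBr. Qed.

Lemma teval0f u : teval (fun _ => 0) u = 0.
Proof. by rewrite /teval big1 // => t _; rewrite mulr0. Qed.

Lemma teval_exchange (F : word -> word -> K) u v :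
  teval (fun a => teval (F a) v) u = teval (fun b => teval (F^~ b) u) v.
Proof.
rewrite /teval; under eq_bigr do rewrite big_distrr.
rewrite exchange_big; apply: eq_bigr => t _; rewrite big_distrr.
by apply: eq_bigr => s _ /=; rewrite mulrCA.
Qed.

(* "Every word of [u] satisfies [P]", stated dually so that words outside [P]
   whose coefficients cancel do not matter. *)
Definition supported (P : pred word) u :=
  forall g, (forall w, P w -> g w = 0) -> teval g u = 0.

Lemma supported_eq P u g h :
  supported P u -> (forall w, P w -> g w = h w) -> teval g u = teval h u.
Proof.
move=> Pu gh; apply/eqP; rewrite -subr_eq0 -teval_subf; apply/eqP/Pu => w Pw.
by rewrite gh // subrr.
Qed.

Lemma supported_const P u f c g : supported P u -> (forall w, P w -> f w = c) ->
  teval (fun w => f w * g w) u = c * teval g u.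
Proof. by move=> Pu fc; rewrite -teval_mulfl; apply: (supported_eq Pu) => w /fc ->. Qed.

Lemma sub_supported (P P' : pred word) u :
  (forall w, P w -> P' w) -> supported P u -> supported P' u.
Proof. by move=> PP' Pu g g0; apply: Pu => w /PP'/g0. Qed.

Lemma supported_mul (P1 P2 P3 : pred word) u v :
  (forall a b, P1 a -> P2 b -> P3 (a ++ b)) ->
  supported P1 u -> supported P2 v -> supported P3 (tmul u v).
Proof.
move=> P123 P1u P2v g g0; rewrite teval_mul; apply: P1u => a P1a.
by apply: P2v => b P2b; apply/g0/P123.
Qed.

Lemma supported_sub P u v : supported P u -> supported P v -> supported P (tsub u v).
Proof. by move=> Pu Pv g g0; rewrite teval_sub Pu // Pv // subrr. Qed.

Lemma supported_scale P a u : supported P u -> supported P (tscale a u).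
Proof. by move=> Pu g g0; rewrite teval_scale Pu // mulr0. Qed.

Lemma supported_letter i : supported (pred1 [:: i]) (tletter K i).
Proof. by move=> g g0; rewrite teval_letter g0 /=. Qed.

End Pairing.

(** * Transposed skew derivations *)

Lemma rcons_nseq (T : Type) (x : T) n : rcons (nseq n x) x = nseq n.+1 x.
Proof. by elim: n => //= n ->. Qed.

Lemma ord2P (c : 'I_2) : c = i1 \/ c = i2.
Proof. by case: c => [[|[|m]] Hc]; [left; exact: val_inj | right; exact: val_inj |]. Qed.

Section SkewDerivations.
Variables (K : fieldType) (q : 'I_2 -> 'I_2 -> K).
Implicit Types (g h : word -> K) (i c : 'I_2) (w : word).

Definition chi i w : K := \prod_(c <- w) q i c.

(* The transpose of the skew derivation [d_i] (see [omega_coef_rcons]). *)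
Definition der i g w : K :=
  \sum_(j <- iota 0 (size w) | nth i1 w j == i) move_fac q j w * g (remove_at j w).

Lemma eq_der i g h w : g =1 h -> der i g w = der i h w.
Proof. by move=> gh; apply: eq_bigr => j _; rewrite gh. Qed.

Lemma eq_iter_der i j g h : g =1 h -> iter j (der i) g =1 iter j (der i) h.
Proof. by move=> gh; elim: j => //= j IH w; apply: eq_der. Qed.

Lemma der_cat i g a b : der i g (a ++ b) =
  der i (fun x => g (a ++ x)) b + chi i b * der i (fun x => g (x ++ b)) a.
Proof.
rewrite /der size_cat iotaD add0n big_cat addrC; congr (_ + _).
  rewrite big_distrr big_mkcond [RHS]big_mkcond big_seq [RHS]big_seq.
  apply: eq_bigr => j; rewrite mem_iota add0n => /andP [_ lt_j_a].
  rewrite nth_cat lt_j_a; case: eqP => [aj_i|_]; last by rewrite ?mulr0.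
  have dropE : drop j.+1 (a ++ b) = drop j.+1 a ++ b.
    rewrite drop_cat; case: ltnP => // le_a_Sj.
    have -> : j.+1 = size a by lia.
    by rewrite subnn drop0 drop_size.
  rewrite /move_fac /remove_at nth_cat lt_j_a dropE big_cat take_cat lt_j_a -catA.
  by rewrite /chi aj_i /= mulrCA mulrA.
have -> : iota (size a) (size b) = map (addn (size a)) (iota 0 (size b)).
  by rewrite -iotaDl addn0.
rewrite big_map big_mkcond [RHS]big_mkcond.
have nthE j : nth i1 (a ++ b) (size a + j) = nth i1 b j.
  by rewrite nth_cat ltnNge leq_addr addKn.
have takeE j : take (size a + j) (a ++ b) = a ++ take j b.
  by rewrite takeD take_size_cat // drop_size_cat.
have dropE j : drop (size a + j) (a ++ b) = drop j b.
  by rewrite addnC -drop_drop drop_size_cat.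
apply: eq_bigr => j _; rewrite nthE; case: ifP => // _.
by rewrite /move_fac /remove_at -addnS takeE dropE nthE catA.
Qed.

Definition qnum (x : K) (d : nat) : K := \sum_(j <- iota 0 d) x ^+ (d - j.+1).

Lemma qnum0 x : qnum x 0 = 0.
Proof. by rewrite /qnum big_nil. Qed.

Lemma qnum1 x : qnum x 1 = 1.
Proof. by rewrite /qnum big_seq1 expr0. Qed.

Lemma der_nseq i g d c :
  der i g (nseq d c) = (c == i)%:R * qnum (q c c) d * g (nseq d.-1 c).
Proof.
rewrite /der size_nseq big_mkcond /qnum big_distrr big_distrl /= big_seq [RHS]big_seq.
apply: eq_bigr => j; rewrite mem_iota add0n => /andP [_ lt_j_d].
rewrite nth_nseq lt_j_d; case: eqP => _; rewrite ?mul0r ?mul1r //.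
rewrite /move_fac nth_nseq lt_j_d drop_nseq big_nseq iter_mulr_1; congr (_ * g _).
rewrite /remove_at take_nseq ?drop_nseq -?nseqD; last exact: ltnW.
congr nseq; lia.
Qed.

Lemma der_letter i g c : der i g [:: c] = (c == i)%:R * g [::].
Proof. by rewrite (der_nseq i g 1 c) qnum1 mulr1. Qed.

Lemma chi_nseq i d c : chi i (nseq d c) = q i c ^+ d.
Proof. by rewrite /chi big_nseq iter_mulr_1. Qed.

Lemma chi_count i w : chi i w = q i i1 ^+ count_mem i1 w * q i i2 ^+ count_mem i2 w.
Proof.
elim: w => [|c w IH]; first by rewrite /chi big_nil !expr0 mulr1.
rewrite /chi big_cons -/(chi i w) IH /=.
by case: (ord2P c) => ->; rewrite /= ?add1n ?add0n ?exprS; ring.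
Qed.

(* Note the argument order: [omega_coef w w'] is the coefficient of [w] in
   [Omega w']. *)
Definition omega_coef w w' : K := tcoef (omega_word q w') w.

Lemma zeroB_teval u : zeroB q u <-> forall w, teval (omega_coef w) u = 0.
Proof.
have coefE w : tcoef (omega q u) w = teval (omega_coef w) u.
  rewrite tcoef_teval /omega teval_tsum big_map; apply: eq_bigr => t _.
  by rewrite teval_scale -tcoef_teval.
by split=> u0 w; [rewrite -coefE | rewrite coefE].
Qed.

Lemma tcoef_mul_letter u c v i :
  tcoef (tmul u (tletter K c)) (rcons v i) = (c == i)%:R * tcoef u v.
Proof.
rewrite !tcoef_teval teval_mul -teval_mulfl; apply: eq_teval => a.
rewrite teval_letter cats1 eqseq_rcons.
by case: (a == v); case: (c == i); rewrite ?mulr1 ?mulr0.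
Qed.

Lemma tcoef_mul_letter_nil u c : tcoef (tmul u (tletter K c)) [::] = 0.
Proof.
rewrite tcoef_teval teval_mul -(teval0f u); apply: eq_teval => a.
by rewrite teval_letter; case: a.
Qed.

Lemma omega_fuelS n w : omega_fuel q n.+1 w =
  tsum [seq tscale (move_fac q j w) (tmul (omega_fuel q n (remove_at j w)) (tletter K (nth i1 w j)))
       | j <- iota 0 (size w)].
Proof. by []. Qed.

Lemma omega_coef_nil w' : omega_coef [::] w' = (w' == [::])%:R.
Proof.
case: w' => [|x s].
  by rewrite /omega_coef /omega_word /= tcoef_teval /teval big_seq1 mul1r.
rewrite /omega_coef /omega_word omega_fuelS tcoef_teval teval_tsum big_map big1 // => j _.
by rewrite teval_scale -tcoef_teval tcoef_mul_letter_nil mulr0.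
Qed.

(* The recursion defining Omega, read on coefficients. *)
Lemma omega_coef_rcons v i w' : omega_coef (rcons v i) w' = der i (omega_coef v) w'.
Proof.
case: w' => [|x s].
  rewrite /omega_coef /omega_word /der big_nil tcoef_teval /teval big_seq1 mul1r.
  by case: v.
rewrite /omega_coef /omega_word omega_fuelS /der tcoef_teval teval_tsum big_map.
rewrite [RHS]big_mkcond big_seq [RHS]big_seq.
apply: eq_bigr => j; rewrite mem_iota add0n => /andP [_ lt_j].
rewrite teval_scale -tcoef_teval tcoef_mul_letter /remove_at size_cat size_take.
rewrite lt_j size_drop /= -/(remove_at j (x :: s)).
have -> : (j + (size s - j))%N = size s by move: lt_j => /=; lia.
by case: eqP; rewrite ?mul1r ?mul0r ?mulr0.
Qed.

Lemma omega_coef_cat_nseq v j w' :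
  omega_coef (v ++ nseq j i1) w' = iter j (der i1) (omega_coef v) w'.
Proof.
elim: j w' => [|j IH] w'; first by rewrite cats0.
rewrite -rcons_nseq -rcons_cat omega_coef_rcons iterS; exact: eq_der.
Qed.

Lemma omega_coef_perm w w' : omega_coef w w' != 0 -> perm_eq w w'.
Proof.
elim/last_ind: w w' => [|v i IH] w'.
  by rewrite omega_coef_nil; case: w' => //= x s; rewrite eqxx.
apply: contraR => not_perm; rewrite omega_coef_rcons /der big_seq_cond big1 // => j.
rewrite mem_iota add0n => /andP [/andP [_ lt_j] /eqP wj_i].
have [->|/IH perm_v] := eqVneq (omega_coef v (remove_at j w')) 0; first by rewrite mulr0.
case/negP: not_perm; apply: (perm_trans (y := rcons (remove_at j w') i)).
  by rewrite -!cats1 perm_cat2r.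
rewrite -wj_i perm_rcons perm_sym /remove_at -{1}(cat_take_drop j w') (drop_nth i1 lt_j).
by apply/permP => P; rewrite /= !count_cat /= addnCA.
Qed.

Definition qfact (x : K) (m : nat) : K := \prod_(1 <= d < m.+1) qnum x d.

Lemma qfact0 x : qfact x 0 = 1.
Proof. by rewrite /qfact big_geq. Qed.

Lemma qfactS x m : qfact x m.+1 = qfact x m * qnum x m.+1.
Proof. by rewrite /qfact big_nat_recr. Qed.

Lemma omega_coef_nseq c m k :
  omega_coef (nseq m c) (nseq k c) = (m == k)%:R * qfact (q c c) m.
Proof.
elim: m k => [|m IH] k.
  by rewrite omega_coef_nil qfact0 mulr1; case: k.
rewrite -rcons_nseq omega_coef_rcons der_nseq eqxx mul1r IH qfactS.
case: k => [|k] /=; first by rewrite qnum0 !mul0r.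
by rewrite eqSS; case: eqP => [->|_]; rewrite ?mul0r ?mulr0 ?mul1r // mulrC.
Qed.

(** * The elements [y_k] *)

Local Notation Y k := (ygen q k).

Lemma ygenS k : Y k.+1 = tsub (tmul (tletter K i1) (Y k))
  (tscale (q i1 i1 ^+ k * q i1 i2) (tmul (Y k) (tletter K i1))).
Proof. by []. Qed.

Definition ydeg k w : bool := (count_mem i1 w == k) && (count_mem i2 w == 1%N).

Lemma ygen_supported k : supported (ydeg k) (Y k).
Proof.
elim: k => [|k IH].
  by apply: (sub_supported _ (@supported_letter K i2)) => w /eqP ->.
rewrite ygenS; apply: supported_sub; last apply: supported_scale.
  apply: (supported_mul _ (@supported_letter K i1) IH) => a b /eqP -> /andP [/eqP a1 /eqP a2].
  by rewrite /ydeg !count_cat a1 a2 /= eqxx.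
apply: (supported_mul _ IH (@supported_letter K i1)) => a b /andP [/eqP a1 /eqP a2] /eqP ->.
by rewrite /ydeg !count_cat a1 a2 /= addn0 addn1 eqxx.
Qed.

Lemma chi_ydeg i k w : ydeg k w -> chi i w = q i i1 ^+ k * q i i2.
Proof. by case/andP => /eqP w1 /eqP w2; rewrite chi_count w1 w2 expr1. Qed.

Lemma ydeg_neq_nil k w : ydeg k w -> w != [::].
Proof. by case: w => // /andP []. Qed.

Fixpoint ycoef k : K :=
  if k is k'.+1 then ycoef k' * (1 - q i1 i1 ^+ k' * q i1 i2 * q i2 i1) else 1.

Lemma teval_der_ygenS i g k : teval (der i g) (Y k.+1) =
  teval (der i (fun x => g (i1 :: x))) (Y k)
  + q i i1 ^+ k * q i i2 * ((i1 == i)%:R * teval g (Y k))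
  - q i1 i1 ^+ k * q i1 i2 *
    ((i1 == i)%:R * teval g (Y k) + q i i1 * teval (der i (fun x => g (x ++ [:: i1]))) (Y k)).
Proof.
rewrite ygenS teval_sub teval_scale !teval_mul teval_letter; congr (_ - _ * _).
  rewrite (eq_teval _ (fun b => der_cat i g [:: i1] b)) teval_addf; congr (_ + _).
  rewrite (supported_const _ (@ygen_supported k) (fun w => @chi_ydeg i k w)); congr (_ * _).
  by rewrite -teval_mulfl; apply: eq_teval => b; rewrite der_letter.
rewrite (eq_teval _ (fun a => teval_letter _ _)).
rewrite (eq_teval _ (fun a => der_cat i g a [:: i1])) teval_addf; congr (_ + _).
  by rewrite -teval_mulfl; apply: eq_teval => a; rewrite der_letter cats0.
by rewrite -teval_mulfl; apply: eq_teval => a; rewrite /chi big_seq1.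
Qed.

Lemma teval_der1_ygen k g : teval (der i1 g) (Y k) = 0.
Proof.
elim: k g => [|k IH] g; first by rewrite teval_letter der_letter mul0r.
by rewrite teval_der_ygenS !IH mulr0 addr0 mul1r add0r; ring.
Qed.

Lemma teval_der2_ygen k g : teval (der i2 g) (Y k) = ycoef k * g (nseq k i1).
Proof.
elim: k g => [|k IH] g; first by rewrite teval_letter der_letter mul1r.
by rewrite teval_der_ygenS !IH /= cats1 rcons_nseq; ring.
Qed.

Lemma ycoef_neq0 k : ~ zeroB q (Y k) -> ycoef k != 0.
Proof.
move=> yk_neq0; apply/eqP => yk0; apply: yk_neq0; apply/zeroB_teval; case/lastP => [|v i].
  apply: ygen_supported => w /ydeg_neq_nil /negPf w_nil.
  by rewrite omega_coef_nil w_nil.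
rewrite (eq_teval _ (omega_coef_rcons v i)); case: (ord2P i) => ->.
  exact: teval_der1_ygen.
by rewrite teval_der2_ygen yk0 mul0r.
Qed.

Lemma ycoef_eq0_le a b : ycoef a = 0 -> (a <= b)%N -> ycoef b = 0.
Proof.
move=> ya0; elim: b => [|b IH]; first by rewrite leqn0 => /eqP <-.
by rewrite leq_eqVlt => /predU1P [<- //| /IH /= ->]; rewrite mul0r.
Qed.

Lemma teval_der1_ymul G a b : teval (der i1 G) (tmul (Y a) (Y b)) = 0.
Proof.
rewrite teval_mul (eq_teval _ (fun x => eq_teval _ (fun y => der_cat i1 G x y))).
rewrite (eq_teval _ (fun x => teval_addf _ _ _)) teval_addf.
rewrite (eq_teval _ (fun x => teval_der1_ygen _ _)) teval0f add0r teval_exchange.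
by rewrite -(teval0f (Y b)); apply: eq_teval => y; rewrite teval_mulfl teval_der1_ygen mulr0.
Qed.

Lemma teval_der2_ymul G a b : teval (der i2 G) (tmul (Y a) (Y b)) =
  ycoef b * teval (fun x => G (x ++ nseq b i1)) (Y a)
  + q i2 i1 ^+ b * q i2 i2 * (ycoef a * teval (fun y => G (nseq a i1 ++ y)) (Y b)).
Proof.
have inner x : teval (fun y => der i2 G (x ++ y)) (Y b) = ycoef b * G (x ++ nseq b i1)
    + q i2 i1 ^+ b * q i2 i2 * teval (fun y => der i2 (fun z => G (z ++ y)) x) (Y b).
  rewrite (eq_teval _ (fun y => der_cat i2 G x y)) teval_addf teval_der2_ygen.
  by rewrite (supported_const _ (@ygen_supported b) (fun w => @chi_ydeg i2 b w)).
rewrite teval_mul (eq_teval _ inner) teval_addf !teval_mulfl teval_exchange.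
by congr (_ + _ * _); rewrite -teval_mulfl; apply: eq_teval => y; rewrite teval_der2_ygen.
Qed.

Definition qfalling (x : K) (b j : nat) : K := \prod_(0 <= i < j) qnum x (b - i).

Lemma qfalling0 x b : qfalling x b 0 = 1.
Proof. by rewrite /qfalling big_geq. Qed.

Lemma qfallingS x b j : qfalling x b j.+1 = qfalling x b j * qnum x (b - j).
Proof. by rewrite /qfalling big_nat_recr. Qed.

Lemma teval_iter_der1_cat_nseq G a d j :
  teval (fun x => iter j (der i1) G (x ++ nseq d i1)) (Y a) =
  qfalling (q i1 i1) d j * teval (fun x => G (x ++ nseq (d - j) i1)) (Y a).
Proof.
elim: j G => [|j IH] G; first by rewrite qfalling0 mul1r subn0.
rewrite (eq_teval _ (fun x => congr1 (fun f => f (x ++ nseq d i1)) (iterSr j (der i1) G))).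
rewrite IH (eq_teval _ (fun x => der_cat i1 G x (nseq (d - j) i1))) teval_addf.
rewrite teval_mulfl teval_der1_ygen mulr0 addr0 qfallingS -mulrA subnS; congr (_ * _).
by rewrite -teval_mulfl; apply: eq_teval => x; rewrite der_nseq eqxx mul1r.
Qed.

Lemma teval_iter_der1_nseq_cat G b d j :
  teval (fun y => iter j (der i1) G (nseq d i1 ++ y)) (Y b) =
  (q i1 i1 ^+ b * q i1 i2) ^+ j * qfalling (q i1 i1) d j *
  teval (fun y => G (nseq (d - j) i1 ++ y)) (Y b).
Proof.
elim: j G => [|j IH] G; first by rewrite qfalling0 expr0 !mul1r subn0.
rewrite (eq_teval _ (fun y => congr1 (fun f => f (nseq d i1 ++ y)) (iterSr j (der i1) G))).
rewrite IH (eq_teval _ (fun y => der_cat i1 G (nseq (d - j) i1) y)) teval_addf.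
rewrite teval_der1_ygen add0r.
rewrite (supported_const _ (@ygen_supported b) (fun w => @chi_ydeg i1 b w)).
have derE y : der i1 (fun x => G (x ++ y)) (nseq (d - j) i1) =
    qnum (q i1 i1) (d - j) * G (nseq (d - j).-1 i1 ++ y).
  by rewrite der_nseq eqxx mul1r.
by rewrite (eq_teval _ derE) teval_mulfl qfallingS exprS subnS; ring.
Qed.

Lemma teval_der2_cat_nseq G a d : teval (fun x => der i2 G (x ++ nseq d i1)) (Y a) =
  q i2 i1 ^+ d * (ycoef a * G (nseq a i1 ++ nseq d i1)).
Proof.
have derE x : der i2 (fun y => G (x ++ y)) (nseq d i1) = 0 by rewrite der_nseq /= !mul0r.
rewrite (eq_teval _ (fun x => der_cat i2 G x (nseq d i1))) teval_addf (eq_teval _ derE).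
by rewrite teval0f add0r teval_mulfl teval_der2_ygen chi_nseq.
Qed.

Lemma teval_der2_nseq_cat G b d : teval (fun y => der i2 G (nseq d i1 ++ y)) (Y b) =
  ycoef b * G (nseq d i1 ++ nseq b i1).
Proof.
have derE y : chi i2 y * der i2 (fun x => G (x ++ y)) (nseq d i1) = 0.
  by rewrite der_nseq /= !mul0r mulr0.
rewrite (eq_teval _ (fun y => der_cat i2 G (nseq d i1) y)) teval_addf (eq_teval _ derE).
by rewrite teval0f addr0 teval_der2_ygen.
Qed.

Lemma qnum_neq0 x n d : qfact x n != 0 -> (0 < d <= n)%N -> qnum x d != 0.
Proof.
rewrite /qfact prodf_seq_neq0 => /allP qnums_neq0 d_range.
by apply: qnums_neq0; rewrite mem_index_iota ltnS.
Qed.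

Lemma qfact_neq0_le x n k : qfact x n != 0 -> (k <= n)%N -> qfact x k != 0.
Proof.
move=> qfact_n le_kn; rewrite /qfact prodf_seq_neq0; apply/allP => d.
by rewrite mem_index_iota ltnS => d_range; apply: (qnum_neq0 qfact_n); lia.
Qed.

Lemma qfalling_eq0 x b j : (b < j)%N -> qfalling x b j = 0.
Proof.
elim: j => // j IH; rewrite ltnS leq_eqVlt qfallingS => /predU1P [->|/IH ->].
  by rewrite subnn qnum0 mulr0.
by rewrite mul0r.
Qed.

Lemma qfalling_neq0 x n b j : qfact x n != 0 -> (j <= b <= n)%N -> qfalling x b j != 0.
Proof.
move=> qfact_n j_range; rewrite /qfalling prodf_seq_neq0; apply/allP => i.
by rewrite mem_index_iota => i_range; apply: (qnum_neq0 qfact_n); lia.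
Qed.

Lemma qfact_neq0 c m : ~ zeroB q (tpow K c m) -> qfact (q c c) m != 0.
Proof.
move=> xm_neq0; apply/eqP => qfact_m0; apply: xm_neq0; apply/zeroB_teval => w.
rewrite teval_pow; have [//|/omega_coef_perm perm_w] := eqVneq (omega_coef w (nseq m c)) 0.
have -> : w = nseq m c.
  have /all_pred1P : all (pred1 c) w by rewrite (perm_all _ perm_w) all_pred1_nseq.
  by rewrite (perm_size perm_w) size_nseq.
by rewrite omega_coef_nseq qfact_m0 mulr0.
Qed.

Lemma teval_omega_ymul_count w a b : count_mem i1 w != (a + b)%N ->
  teval (omega_coef w) (tmul (Y a) (Y b)) = 0.
Proof.
have supp_ab : supported (fun w' => count_mem i1 w' == (a + b)%N) (tmul (Y a) (Y b)).
  apply: supported_mul (@ygen_supported a) (@ygen_supported b).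
  by move=> x y /andP [/eqP x1 _] /andP [/eqP y1 _]; rewrite count_cat x1 y1.
move=> w_deg; apply: supp_ab => w' /eqP w'_deg; apply/eqP; apply: contraR w_deg.
by move/omega_coef_perm/permP => ->; rewrite w'_deg.
Qed.

Lemma teval_omega_nseq_cat_ygen s w d : ycoef s = 0 ->
  teval (fun y => omega_coef w (nseq d i1 ++ y)) (Y s) = 0.
Proof.
move=> ys0; elim/last_ind: w d => [|v i IH] d.
  apply: (@ygen_supported s) => y /ydeg_neq_nil y_neq_nil.
  by rewrite omega_coef_nil; case: d => [|d] /=; [rewrite (negPf y_neq_nil) | ].
rewrite (eq_teval _ (fun y => omega_coef_rcons v i _)); case: (ord2P i) => ->.
  by rewrite (teval_iter_der1_nseq_cat _ _ _ 1) IH mulr0.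
by rewrite teval_der2_nseq_cat ys0 mul0r.
Qed.

Lemma ymul_zeroB r s : ycoef s = 0 -> zeroB q (tmul (Y r) (Y s)).
Proof.
move=> ys0; apply/zeroB_teval; case/lastP => [|v i].
  have supp_rs : supported (fun w => count_mem i2 w == 2%N) (tmul (Y r) (Y s)).
    apply: supported_mul (@ygen_supported r) (@ygen_supported s).
    by move=> x y /andP [_ /eqP x2] /andP [_ /eqP y2]; rewrite count_cat x2 y2.
  by apply: supp_rs => -[|c w] //; rewrite omega_coef_nil.
rewrite (eq_teval _ (omega_coef_rcons v i)); case: (ord2P i) => ->.
  exact: teval_der1_ymul.
by rewrite teval_der2_ymul ys0 teval_omega_nseq_cat_ygen // mul0r !mulr0 addr0.
Qed.

Definition probe_word n j : word := rcons (rcons (nseq (n - j) i1) i2 ++ nseq j i1) i2.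

Lemma count_probe_word n j : (j <= n)%N -> count_mem i1 (probe_word n j) = n.
Proof. by move=> le_jn; rewrite /probe_word -!cats1 !count_cat /= !count_nseq /=; lia. Qed.

(* Read off from [teval_probe_ymul] below. *)
Definition probe_coef j a b : K := ycoef a * ycoef b *
  (qfalling (q i1 i1) b j * q i2 i1 ^+ (b - j)
   + q i2 i2 * q i2 i1 ^+ b * (q i1 i1 ^+ b * q i1 i2) ^+ j * qfalling (q i1 i1) a j).

Lemma teval_probe_ymul n j a b : (j <= n)%N -> (a + b)%N = n ->
  teval (omega_coef (probe_word n j)) (tmul (Y a) (Y b)) =
  qfact (q i1 i1) (n - j) * probe_coef j a b.
Proof.
move=> le_jn ab_n; set G := omega_coef (nseq (n - j) i1).
have probeE w' : omega_coef (probe_word n j) w' = der i2 (iter j (der i1) (der i2 G)) w'.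
  rewrite omega_coef_rcons; apply: eq_der => x; rewrite omega_coef_cat_nseq.
  exact/eq_iter_der/omega_coef_rcons.
have Geval s t : (s + t = n - j)%N -> G (nseq s i1 ++ nseq t i1) = qfact (q i1 i1) (n - j).
  by move=> st; rewrite /G -nseqD omega_coef_nseq st eqxx mul1r.
rewrite (eq_teval _ probeE) teval_der2_ymul teval_iter_der1_cat_nseq.
rewrite teval_iter_der1_nseq_cat teval_der2_cat_nseq teval_der2_nseq_cat /probe_coef.
have [le_jb|lt_bj] := leqP j b.
  rewrite (Geval a (b - j)%N); last lia.
  have [le_ja|lt_aj] := leqP j a; last by rewrite (qfalling_eq0 _ lt_aj); ring.
  by rewrite (Geval (a - j)%N b); [ring | lia].
rewrite (qfalling_eq0 _ lt_bj).
have [le_ja|lt_aj] := leqP j a; last by rewrite (qfalling_eq0 _ lt_aj); ring.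
by rewrite (Geval (a - j)%N b); [ring | lia].
Qed.

End SkewDerivations.

(** * The triangular system *)

Local Notation Y q k := (ygen q k).

Section ProbeSystem.
Variables (K : fieldType) (q : 'I_2 -> 'I_2 -> K) (l : nat) (C : nat -> K).
Local Notation n := (2 * l + 1)%N.

Hypothesis qfact_n : qfact (q i1 i1) n != 0.
Hypothesis ycoef_le : forall r, (r <= l.+1)%N -> ycoef q r != 0.
Hypothesis probe_rel : forall j, (j <= n)%N ->
  probe_coef q j l.+1 l = \sum_(r < l.+1) C r * probe_coef q j r (n - r).

Lemma probe_coef_lt j a b : (a < j)%N ->
  probe_coef q j a b = ycoef q a * ycoef q b * (qfalling (q i1 i1) b j * q i2 i1 ^+ (b - j)).
Proof. by move=> lt_aj; rewrite /probe_coef (qfalling_eq0 _ lt_aj) mulr0 addr0. Qed.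

Lemma mul_probe_coef_eq0 c j a b : c * ycoef q b = 0 -> c * probe_coef q j a b = 0.
Proof. by move=> cb0; rewrite /probe_coef [ycoef q a * _]mulrC -!mulrA mulrA cb0 mul0r. Qed.

(* Probing with [j = n - r] isolates [C r] against everything of smaller index. *)
Lemma C_ycoef_eq0 r : (r < l)%N -> C r * ycoef q (n - r) = 0.
Proof.
elim/ltn_ind: r => r IH lt_rl.
have lt_r_Sl : (r < l.+1)%N by lia.
have := probe_rel (leq_subr r n).
rewrite probe_coef_lt; last lia.
rewrite (qfalling_eq0 _ (_ : l < n - r)%N); last lia.
rewrite mul0r mulr0 (bigD1 (Ordinal lt_r_Sl)) //= big1 ?addr0 => [|r' ne_r'r]; last first.
  have lt_r'_Sl := ltn_ord r'.
  have [lt_r'r|lt_rr'|eq_r'r] := ltngtP r' r.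
  - by apply: mul_probe_coef_eq0; apply: IH => //; lia.
  - by rewrite probe_coef_lt ?qfalling_eq0 ?mul0r ?mulr0 //; lia.
  - by move: ne_r'r; rewrite -val_eqE /= eq_r'r eqxx.
rewrite probe_coef_lt ?subnn ?expr0 ?mulr1 => [Crr|]; last lia.
have nz : ycoef q r * qfalling (q i1 i1) (n - r) (n - r) != 0.
  by rewrite mulf_neq0 ?ycoef_le ?(qfalling_neq0 qfact_n) ?leqnn ?leq_subr //; lia.
by apply: (mulIf nz); rewrite mul0r Crr; ring.
Qed.

Lemma probe_rel_top j : (j <= n)%N -> probe_coef q j l.+1 l = C l * probe_coef q j l l.+1.
Proof.
move=> le_jn; rewrite probe_rel // big_ord_recr /= big1 ?add0r => [|r _].
  by congr (_ * probe_coef _ _ _ _); lia.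
exact: mul_probe_coef_eq0 (C_ycoef_eq0 (ltn_ord r)).
Qed.

Lemma probe_coef_top a : probe_coef q a.+1 a.+1 a = ycoef q a.+1 * ycoef q a *
  qfalling (q i1 i1) a.+1 a.+1 * (q i2 i2 * q i2 i1 ^+ a * (q i1 i1 ^+ a * q i1 i2) ^+ a.+1).
Proof. by rewrite /probe_coef (qfalling_eq0 _ (ltnSn a)); ring. Qed.

Lemma probe_coef0 a b :
  probe_coef q 0 a b = ycoef q a * ycoef q b * q i2 i1 ^+ b * (1 + q i2 i2).
Proof. by rewrite /probe_coef !qfalling0 subn0 expr0; ring. Qed.

Lemma C_top : C l = q i1 i1 ^+ (l * l.+1) * q i1 i2 ^+ l.+1 * q i2 i1 ^+ l * q i2 i2.
Proof.
have nz : ycoef q l.+1 * ycoef q l * qfalling (q i1 i1) l.+1 l.+1 != 0.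
  apply: mulf_neq0; first by apply: mulf_neq0; apply: ycoef_le.
  by apply: (qfalling_neq0 qfact_n); lia.
apply: (mulIf nz); rewrite [RHS](_ : _ = probe_coef q l.+1 l.+1 l).
  by rewrite probe_rel_top ?probe_coef_lt ?subnn ?expr0 //; [ring | lia].
by rewrite probe_coef_top exprMn exprM; ring.
Qed.

Lemma C_top_mul_q21 : q i2 i1 != 0 -> 1 + q i2 i2 != 0 -> C l * q i2 i1 = 1.
Proof.
move=> q21_neq0 q22_neq_m1.
have nz : ycoef q l.+1 * ycoef q l * q i2 i1 ^+ l * (1 + q i2 i2) != 0.
  apply: mulf_neq0 => //; apply: mulf_neq0; last exact: expf_neq0.
  by apply: mulf_neq0; apply: ycoef_le.
by apply: (mulIf nz); rewrite mul1r -[RHS]probe_coef0 probe_rel_top // probe_coef0 exprS; ring.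
Qed.

End ProbeSystem.

Section SpanRelation.
Variables (K : fieldType) (q : 'I_2 -> 'I_2 -> K) (l : nat).
Local Notation n := (2 * l + 1)%N.

(* The [x_1]-degree-[n] part of a relation [y_(l+1) y_l = sum_(r <= s) c_rs y_r y_s],
   paired with [Omega]; only [r <= l] survive since [r <= s] and [r + s = n]. *)
Definition ymul_component (C : nat -> K) : Prop := forall w, count_mem i1 w = n ->
  teval (omega_coef q w) (tmul (Y q l.+1) (Y q l)) =
  \sum_(r < l.+1) C r * teval (omega_coef q w) (tmul (Y q r) (Y q (n - r))).

Lemma ymul_span_component (N : nat) (c : nat -> nat -> K) :
  eqB q (tmul (Y q l.+1) (Y q l))
    (tsum [seq tscale (c rs.1 rs.2) (tmul (Y q rs.1) (Y q rs.2))
          | rs <- [seq (r, s) | r <- iota 0 N, s <- iota 0 N] & rs.1 <= rs.2]%N) ->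
  exists C, ymul_component C.
Proof.
set L := filter _ _ => span.
have spanE w : teval (omega_coef q w) (tmul (Y q l.+1) (Y q l)) =
    \sum_(x <- L) c x.1 x.2 * teval (omega_coef q w) (tmul (Y q x.1) (Y q x.2)).
  move/zeroB_teval: span => /(_ w) /eqP; rewrite teval_sub subr_eq0 teval_tsum big_map.
  by move=> /eqP ->; apply: eq_bigr => x _; rewrite teval_scale.
exists (fun r => \sum_(x <- L | (x.1 == r) && (x.1 + x.2 == n)) c x.1 x.2) => w w_deg.
rewrite spanE; under [RHS]eq_bigr do rewrite big_distrl big_mkcond /=.
rewrite exchange_big /=; apply: eq_big_seq => -[a b]; rewrite mem_filter /= => /andP [le_ab _].
have [ab_deg|ab_deg] := eqVneq (a + b)%N n; last first.
  rewrite teval_omega_ymul_count ?w_deg 1?eq_sym // mulr0.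
  by rewrite big1 // => r _; rewrite andbF.
under eq_bigr do rewrite andbT eq_sym.
pose F r := c a b * teval (omega_coef q w) (tmul (Y q r) (Y q (n - r))).
rewrite -big_mkcond (big_ord1_eq _ F).
by rewrite ifT /F -?ab_deg ?addKn //; lia.
Qed.

Lemma probe_relation C : qfact (q i1 i1) n != 0 -> ymul_component C ->
  forall j, (j <= n)%N ->
  probe_coef q j l.+1 l = \sum_(r < l.+1) C r * probe_coef q j r (n - r).
Proof.
move=> qfact_n compC j le_jn; have := compC _ (count_probe_word le_jn).
rewrite teval_probe_ymul //; last lia.
have deg_r (r : 'I_l.+1) : (r + (n - r))%N = n by move: (ltn_ord r); lia.
under eq_bigr => r _ do rewrite (teval_probe_ymul q le_jn (deg_r r)) mulrCA.
by rewrite -mulr_sumr; apply: mulfI; apply: qfact_neq0_le qfact_n (leq_subr j n).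
Qed.

Lemma eqB_of_component C : ymul_component C ->
  (forall r, (r < l)%N -> C r * ycoef q (n - r) = 0) ->
  eqB q (tmul (Y q l.+1) (Y q l)) (tscale (C l) (tmul (Y q l) (Y q l.+1))).
Proof.
move=> compC C_low; apply/zeroB_teval => w; rewrite teval_sub teval_scale.
have [w_deg|w_deg] := eqVneq (count_mem i1 w) n; last first.
  by rewrite !teval_omega_ymul_count ?mulr0 ?subr0 //; apply: contra_neq w_deg => ->; lia.
rewrite compC // big_ord_recr /= big1 ?add0r => [|r _].
  have -> : (n - l = l.+1)%N by lia.
  by rewrite subrr.
have /eqP := C_low r (ltn_ord r); rewrite mulf_eq0 => /orP [/eqP -> | /eqP ys0].
  by rewrite mul0r.
by have /zeroB_teval -> := ymul_zeroB r ys0; rewrite mulr0.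
Qed.

End SpanRelation.

Theorem lemma4 (K : closedFieldType) (hchar : [pchar K] =i pred0)
  (q : 'I_2 -> 'I_2 -> K) (hq0 : forall i j, q i j != 0)
  (hq1 : forall i, q i i != 1) (l : nat)
  (hx1 : ~ zeroB q (tpow K i1 (2 * l + 1)))
  (hx2 : ~ zeroB q (tpow K i2 2))
  (hy : ~ zeroB q (ygen q l.+1))
  (hspan : exists (N : nat) (c : nat -> nat -> K),
      eqB q (tmul (ygen q l.+1) (ygen q l))
        (tsum [seq tscale (c rs.1 rs.2) (tmul (ygen q rs.1) (ygen q rs.2))
              | rs <- [seq (r, s) | r <- iota 0 N, s <- iota 0 N] & rs.1 <= rs.2]%N)) :
  q i1 i1 ^+ (l * l.+1) * (q i1 i2 * q i2 i1) ^+ l.+1 * q i2 i2 = 1 /\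
  eqB q (tmul (ygen q l.+1) (ygen q l))
    (tscale (q i1 i1 ^+ (l * l.+1) * q i1 i2 ^+ l.+1 * q i2 i1 ^+ l * q i2 i2)
            (tmul (ygen q l) (ygen q l.+1))).
Proof.
have qfact_n := qfact_neq0 hx1.
have q22_neq_m1 : 1 + q i2 i2 != 0.
  have := qnum_neq0 (qfact_neq0 hx2) (isT : 0 < 2 <= 2)%N.
  by rewrite /qnum !big_cons big_nil addr0 expr0 expr1 addrC.
have ycoef_le r : (r <= l.+1)%N -> ycoef q r != 0.
  move=> le_r; apply: contra_neq (ycoef_neq0 hy) => yr0.
  exact: ycoef_eq0_le yr0 le_r.
have [C compC] : exists C, ymul_component q l C.
  by case: hspan => N [c /ymul_span_component].
have probe_rel := probe_relation qfact_n compC.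
have C_l := C_top qfact_n ycoef_le probe_rel.
split; last first.
  by rewrite -C_l; apply: eqB_of_component compC (C_ycoef_eq0 qfact_n ycoef_le probe_rel).
rewrite -(C_top_mul_q21 qfact_n ycoef_le probe_rel (hq0 _ _) q22_neq_m1) C_l.
by rewrite exprMn [q i2 i1 ^+ _]exprSr !mulrA mulrAC.
Qed.
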